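(* Let $k$ be a field and let $d,m$ be integers with $d$ even and $2 \le d < m-1$. Set $a=(d+2)/2$. Then \[ k[\Delta(d,m)] \cong k[x_1,\dots,x_m]/(I_{a,1,m-1},\, I_{a,2,m}), \] i.e. the Stanley–Reisner ideal of $\Delta(d,m)$ (with vertices labeled as below) is the ideal of $k[x_1,\dots,x_m]$ generated by $I_{a,1,m-1}$ and $I_{a,2,m}$.
   Context: For integers $2\le d<m$, fix real numbers $t_1<t_2<\dots<t_m$ and let $C_d(m)\subset\mathbb{R}^d$ be the cyclic polytope, the convex hull of the points $f(t_1),\dots,f(t_m)$ where $f(t)=(t,t^2,\dots,t^d)$. It is a simplicial $d$-polytope whose combinatorial type does not depend on the choice of the $t_i$. $\Delta(d,m)$ denotes its boundary simplicial complex on the vertex set $\{1,\dots,m\}$ (vertex $i$ corresponding to $f(t_i)$): its faces are the empty set and the vertex sets of proper faces of $C_d(m)$. For a simplicial complex $\Delta$ on $\{1,\dots,m\}$, its Stanley–Reisner ring is $k[\Delta]=k[x_1,\dots,x_m]/I_\Delta$, where $I_\Delta$ is generated by the squarefree monomials $\prod_{t\in W}x_t$ with $W\notin\Delta$. For positive integers $a,p,q$ with $p<q$ and $2a\le q-p+2$, $I_{a,p,q}$ denotes the ideal of $k[x_p,\dots,x_q]$ (and also its extension to any larger polynomial ring) generated by all monomials $x_{t_1}x_{t_2}\cdots x_{t_a}$ with $p\le t_1$, $t_a\le q$ and $t_j+2\le t_{j+1}$ for $1\le j\le a-1$. *)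

From HB Require Import structures.
From mathcomp Require Import all_boot all_order all_algebra.
From mathcomp Require Import reals.
From mathcomp Require Import mpoly.

Set Implicit Arguments.
Unset Strict Implicit.
Unset Printing Implicit Defensive.

Import Order.TTheory GRing.Theory Num.Theory.
Local Open Scope ring_scope.

(* Convention: vertex j of Delta(d,m) (1 <= j <= m) is the ordinal
   (j-1 : 'I_m); the variable x_j of k[x_1,...,x_m] is 'X_(j-1). *)

(* Value of the linear functional c on the moment-curve point
   f(s) = (s, s^2, ..., s^d). *)
Definition moment_lin (R : realType) (d : nat) (c : 'rV[R]_d) (s : R) : R :=
  \sum_(j < d) c 0 j * s ^+ j.+1.

(* W (a set of vertices) is the vertex set of a proper face of the cyclic
   polytope conv{f(t_1),...,f(t_m)}: there is a supporting hyperplane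
   {y | <c,y> = b}, c <> 0, with all vertices in {<c,y> <= b} and the vertices
   lying on it exactly those of W. *)
Definition cyclic_proper_face (R : realType) (d m : nat) (t : 'I_m -> R)
    (W : {set 'I_m}) : Prop :=
  exists (c : 'rV[R]_d) (b : R), c != 0 /\
    forall i : 'I_m, moment_lin c (t i) <= b /\
                     ((moment_lin c (t i) == b) = (i \in W)).

Definition cyclic_face (R : realType) (d m : nat) (t : 'I_m -> R)
    (W : {set 'I_m}) : Prop :=
  W = set0 \/ cyclic_proper_face d t W.

Definition sqfree_mon (k : fieldType) (m : nat) (W : {set 'I_m}) : {mpoly k[m]} :=
  \prod_(i in W) 'X_i.

Definition ideal_gen (k : fieldType) (m : nat) (S : {mpoly k[m]} -> Prop)
    : {mpoly k[m]} -> Prop :=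
  fun p => exists l : seq ({mpoly k[m]} * {mpoly k[m]}),
    (forall x, x \in l -> S x.2) /\ p = \sum_(x <- l) x.1 * x.2.

Definition SR_ideal (k : fieldType) (m : nat) (face : {set 'I_m} -> Prop)
    : {mpoly k[m]} -> Prop :=
  ideal_gen (fun g => exists W : {set 'I_m}, ~ face W /\ g = @sqfree_mon k m W).

(* Generators of I_{a,p,q} (1-based p, q): monomials x_{t_1}...x_{t_a}
   with p <= t_1, t_a <= q, t_j + 2 <= t_{j+1}; i.e. products over sets W of
   a vertices in [p,q] any two of which differ by at least 2. *)
Definition Iapq_gen (k : fieldType) (m a p q : nat) (g : {mpoly k[m]}) : Prop :=
  exists W : {set 'I_m},
    [/\ #|W| = a,
        (forall i : 'I_m, i \in W -> (p <= i.+1 <= q)%N),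
        (forall i j : 'I_m, i \in W -> j \in W -> (i < j)%N -> (i.+2 <= j)%N)
      & g = @sqfree_mon k m W].

Definition Iapq (k : fieldType) (m a p q : nat) : {mpoly k[m]} -> Prop :=
  @ideal_gen k m (@Iapq_gen k m a p q).
Arguments Iapq_gen : clear implicits.
Arguments Iapq : clear implicits.

(* Write d = 2n.  A vertex set W spans a proper face of C_d(m) iff some
   nonconstant polynomial P of degree at most d (the supporting hyperplane
   restricted to the moment curve) is <= 0 at every t_i and vanishes exactly
   at the t_i with i in W.
   If W contains n + 1 pairwise non-consecutive vertices S avoiding one
   endpoint, no such P exists: the divided difference of P over S and the
   neighbours of S vanishes, its terms at S are zero and those at the
   neighbours all have the same sign, so P has 2n + 2 roots.  Otherwise W,
   which misses some vertex, is covered by at most n cyclically consecutive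
   pairs {g, g + 1} and singletons, and minus the product of the
   corresponding quadratic factors is such a P (Gale's evenness condition).
   So the nonfaces are exactly the supersets of the supports of the
   generators of I_{n+1,1,m-1} and I_{n+1,2,m}. *)

From HB Require Import structures.
From mathcomp Require Import all_boot all_order all_algebra.
From mathcomp Require Import reals.
From mathcomp Require Import mpoly.
From mathcomp Require Import zify.
Import Order.TTheory GRing.Theory Num.Theory.
Set Implicit Arguments.
Unset Strict Implicit.
Unset Printing Implicit Defensive.
Local Open Scope ring_scope.

Section IdealGen.
Variables (k : fieldType) (m : nat).
Implicit Types (S T : {mpoly k[m]} -> Prop) (p q : {mpoly k[m]}).

Lemma ideal_gen0 S : ideal_gen S 0.
Proof. by exists [::]; rewrite big_nil. Qed.

Lemma ideal_genD S p q : ideal_gen S p -> ideal_gen S q -> ideal_gen S (p + q).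
Proof.
move=> [l1 [S_l1 ->]] [l2 [S_l2 ->]]; exists (l1 ++ l2); rewrite big_cat.
by split=> // x; rewrite mem_cat => /orP[/S_l1|/S_l2].
Qed.

Lemma ideal_genMl S h p : ideal_gen S p -> ideal_gen S (h * p).
Proof.
move=> [l [S_l ->]]; exists [seq (h * x.1, x.2) | x <- l]; split.
  by move=> _ /mapP[x xl ->] /=; apply: S_l.
by rewrite big_map mulr_sumr; apply: eq_bigr => x _; rewrite mulrA.
Qed.

Lemma ideal_gen_mem S g : S g -> ideal_gen S g.
Proof.
move=> Sg; exists [:: (1, g)]; rewrite big_seq1 mul1r.
by split=> // x; rewrite inE => /eqP ->.
Qed.

Lemma ideal_gen_sub S T p :
  (forall g, S g -> ideal_gen T g) -> ideal_gen S p -> ideal_gen T p.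
Proof.
move=> ST [l [S_l ->]]; elim: l S_l => [|x l IHl] S_l.
  by rewrite big_nil; apply: ideal_gen0.
rewrite big_cons; apply: ideal_genD; first by apply/ideal_genMl/ST/S_l/mem_head.
by apply: IHl => y yl; apply/S_l; rewrite inE yl orbT.
Qed.

Lemma sqfree_mon_subset (W A : {set 'I_m}) : A \subset W ->
  sqfree_mon k W = sqfree_mon k (W :\: A) * sqfree_mon k A.
Proof. by move=> AW; rewrite /sqfree_mon (big_setID A) /= mulrC (setIidPr AW). Qed.

End IdealGen.

Section DividedDifference.
Variables (F : fieldType) (I : finType) (x : I -> F) (U : {set I}).
Hypothesis x_inj : {in U &, injective x}.

Lemma poly_eq0_on (p : {poly F}) :
  (size p <= #|U|)%N -> {in U, forall i, p.[x i] = 0} -> p = 0.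
Proof.
move=> szp p0; apply: (roots_geq_poly_eq0 (rs := map x (enum U))).
- by apply/allP => _ /mapP[i iU ->]; rewrite mem_enum in iU; apply/rootP/p0.
- by rewrite map_inj_in_uniq ?enum_uniq // => i j; rewrite !mem_enum; apply: x_inj.
- by rewrite size_map -cardE.
Qed.

(* Lagrange interpolation reproduces q exactly, and the weighted sum is the
   coefficient of degree #|U| - 1 of the interpolant. *)
Lemma divided_difference_eq0 (q : {poly F}) : (size q < #|U|)%N ->
  \sum_(i in U) q.[x i] / \prod_(j in U :\ i) (x i - x j) = 0.
Proof.
move=> szq.
pose w i := \prod_(j in U :\ i) (x i - x j).
pose L i := \prod_(j in U :\ i) ('X - (x j)%:P).
have w_neq0 i : i \in U -> w i != 0.
  move=> iU; apply/prodf_neq0 => j /setD1P[ji jU]; rewrite subr_eq0.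
  by apply: contra ji => /eqP/x_inj-> //.
have size_L i : i \in U -> size (L i) = #|U|.
  by move=> iU; rewrite /L -big_enum size_prod_XsubC -cardE (cardsD1 i U) iU.
have L_monic i : L i \is monic by rewrite /L -big_enum monic_prod_XsubC.
pose r := \sum_(i in U) (q.[x i] / w i) *: L i.
have r_q : r = q.
  apply/eqP; rewrite -subr_eq0; apply/eqP/poly_eq0_on => [|l lU].
    rewrite (leq_trans (size_polyD _ _)) // size_polyN geq_max (ltnW szq) andbT.
    rewrite (leq_trans (size_sum _ _ _)) //; apply/bigmax_leqP => i iU.
    by rewrite (leq_trans (size_scale_leq _ _)) ?size_L.
  rewrite hornerD hornerN /r horner_sum (bigD1 l) //= big1 ?addr0 => [|i /andP[_ il]].
    rewrite hornerZ /L horner_prod.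
    under eq_bigr do rewrite hornerXsubC.
    by rewrite divfK ?w_neq0 // subrr.
  rewrite hornerZ /L horner_prod (bigD1 l) /=; last by rewrite !inE eq_sym il.
  by rewrite hornerXsubC subrr mul0r mulr0.
have U_gt0 : (0 < #|U|)%N by apply: leq_ltn_trans szq.
have szq' : (size q <= #|U|.-1)%N by rewrite -ltnS prednK.
have /(congr1 (fun p : {poly F} => p`_#|U|.-1)) := r_q.
rewrite coef_sum (nth_default _ szq') => coef_r; rewrite -[RHS]coef_r.
apply: eq_bigr => i iU; rewrite coefZ.
by have /monicP := L_monic i; rewrite lead_coefE size_L // => ->; rewrite mulr1.
Qed.

End DividedDifference.

Section Increasing.
Variables (R : realDomainType) (N : nat) (t : 'I_N -> R).
Hypothesis t_incr : forall i j : 'I_N, (i < j)%N -> t i < t j.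

Lemma incr_inj : injective t.
Proof.
by move=> i j tij; apply/val_inj/eqP; case: ltngtP => // /t_incr; rewrite tij ltxx.
Qed.

Lemma incr_le (i j : 'I_N) : (i <= j)%N -> t i <= t j.
Proof. by rewrite leq_eqVlt => /orP[/eqP/val_inj-> // | /t_incr/ltW]. Qed.

Lemma prod_sub_gt0 (U : {set 'I_N}) (i : 'I_N) :
  ~~ odd #|[set j in U | (i < j)%N]| -> 0 < \prod_(j in U :\ i) (t i - t j).
Proof.
move=> even_above; rewrite (bigID (fun j : 'I_N => (j < i)%N)) /=.
apply: mulr_gt0; first by apply: prodr_gt0 => j /andP[_ ji]; rewrite subr_gt0 t_incr.
have above j : (j \in U :\ i) && ~~ (j < i)%N = (j \in [set j in U | (i < j)%N]).
  by rewrite !inE -leqNgt ltn_neqAle andbCA andbA; congr (_ && _); rewrite eq_sym.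
rewrite (eq_bigl _ _ above) (eq_bigr (fun j => - (t j - t i))) => [|j _]; last first.
  by rewrite opprB.
rewrite prodrN -signr_odd (negbTE even_above) expr0 mul1r.
by apply: prodr_gt0 => j; rewrite inE => /andP[_ ij]; rewrite subr_gt0 t_incr.
Qed.

End Increasing.

Definition sparse N (S : {set 'I_N}) :=
  {in S &, forall i j : 'I_N, (i < j)%N -> (i.+2 <= j)%N}.

Lemma card_sep_sum (T : finType) (A : {set T}) (P : pred T) :
  #|[set j in A | P j]| = (\sum_(j in A) P j)%N.
Proof.
rewrite -sum1_card (eq_bigl (fun j => (j \in A) && P j)) => [|j]; last by rewrite inE.
by rewrite big_mkcondr /=; apply: eq_bigr => j _; case: (P j).
Qed.

Fixpoint run_length (p : nat -> bool) (k : nat) : nat :=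
  if p k then (if k is k'.+1 then (run_length p k').+1 else 1) else 0.

Lemma run_length_gt0 p k : (0 < run_length p k)%N = p k.
Proof. by case: k => [|k] /=; case: (p _). Qed.

Section CyclicOrder.
Variable M : nat.
Implicit Types (W G S : {set 'I_M.+1}).

Lemma val_ordS (i : 'I_M.+1) : (i < M)%N -> (ordS i : nat) = i.+1.
Proof. by move=> iM; rewrite /= modn_small. Qed.

Lemma notin_ord_max S : ord_max \notin S <-> {in S, forall i : 'I_M.+1, (i < M)%N}.
Proof.
split=> [maxS i iS | S_lt]; last by apply/negP => /S_lt; rewrite ltnn.
rewrite ltn_neqAle -ltnS ltn_ord andbT.
by apply: contraNneq maxS => iM; rewrite (_ : ord_max = i) //; apply: ord_inj.
Qed.

Lemma notin_ord0 S : ord0 \notin S <-> {in S, forall i : 'I_M.+1, (0 < i)%N}.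
Proof.
split=> [minS i iS | S_gt0]; last by apply/negP => /S_gt0; rewrite ltnn.
rewrite lt0n; apply: contraNneq minS => i0.
by rewrite (_ : ord0 = i) //; apply: ord_inj.
Qed.

Lemma cyclic_sparse S : {in S, forall s, ordS s \notin S} ->
  sparse S /\ (ord_max \notin S \/ ord0 \notin S).
Proof.
move=> S_free; split.
  move=> i j iS jS ij; rewrite ltn_neqAle ij andbT.
  apply/eqP => ji; have iM : (i < M)%N by rewrite -ltnS ji.
  have := S_free i iS; rewrite (_ : ordS i = j) ?jS //.
  by apply: ord_inj; rewrite val_ordS.
have [maxS|] := boolP (ord_max \in S); last by left.
right; have := S_free _ maxS.
by rewrite (_ : ordS ord_max = ord0) //; apply/val_inj; rewrite /= modnn.
Qed.

Lemma sparse_shift_disjoint S : sparse S -> ord_max \notin S ->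
  [disjoint S & [set ordS s | s in S]].
Proof.
move=> spS /notin_ord_max S_lt; rewrite disjoint_sym disjoint_subset.
apply/subsetP => _ /imsetP[s sS ->]; rewrite inE; apply/negP => sSS.
by have := spS _ _ sS sSS; rewrite val_ordS ?S_lt // ltnSn ltnn => /(_ isT).
Qed.

Lemma sparse_shift_above_even S s : sparse S -> ord_max \notin S -> s \in S ->
  ~~ odd #|[set j in S :|: [set ordS i | i in S] | (ordS s < j)%N]|.
Proof.
move=> spS maxS sS; have /notin_ord_max S_lt := maxS.
rewrite card_sep_sum (eq_bigl [predU S & [set ordS i | i in S]]) => [|j]; last first.
  by rewrite !inE.
rewrite bigU ?sparse_shift_disjoint //= big_imset /=; last first.
  by move=> ? ? _ _; apply: ordS_inj.
have above_s j : j \in S -> ((ordS s < j)%N : nat) = (s < j)%N.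
  move=> jS; rewrite val_ordS ?S_lt //; congr nat_of_bool.
  by apply/idP/idP => [/ltnW|/spS]; apply.
have above_Ss j : j \in S -> ((ordS s < ordS j)%N : nat) = (s < j)%N.
  by move=> jS; rewrite !val_ordS ?S_lt.
by rewrite (eq_bigr _ above_s) (eq_bigr _ above_Ss) addnn odd_double.
Qed.

Lemma sparse_evens n : (n.*2 < M)%N ->
  exists S, [/\ #|S| = n.+1, sparse S & ord_max \notin S].
Proof.
move=> nM; pose ev (k : 'I_n.+1) : 'I_M.+1 := inord k.*2.
have evE k : (ev k : nat) = k.*2 by rewrite inordK //; have := ltn_ord k; lia.
exists [set ev k | k in 'I_n.+1]; split.
- rewrite card_imset ?card_ord // => a b /(congr1 val).
  by rewrite /= !evE => /double_inj /val_inj.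
- by move=> _ _ /imsetP[a _ ->] /imsetP[b _ ->]; rewrite !evE; lia.
- apply/notin_ord_max => _ /imsetP[k _ ->]; rewrite evE.
  by have := ltn_ord k; lia.
Qed.

(* Along the cycle starting right after j, each maximal run of W is covered
   by the pairs {g, ordS g} with g at an odd position in its run. *)
Lemma cyclic_pairing W (j : 'I_M.+1) : j \notin W ->
  exists G, [/\ G \subset W, {in G, forall g, ordS g \notin G} &
    {in W, forall w, w \in G \/ exists2 g, g \in G & w = ordS g}].
Proof.
move=> jW; have j_le : (j <= M)%N by rewrite -ltnS.
pose step k : 'I_M.+1 := inord ((j.+1 + k) %% M.+1).
pose rank (w : 'I_M.+1) := ((w + (M - j)) %% M.+1)%N.
have stepE k : (step k : nat) = ((j.+1 + k) %% M.+1)%N by rewrite inordK // ltn_pmod.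
have step_rank w : step (rank w) = w.
  apply: ord_inj; rewrite stepE modnDmr (_ : (j.+1 + (w + (M - j)) = w + M.+1)%N).
    by rewrite modnDr modn_small.
  by lia.
have rank_step k : (k <= M)%N -> rank (step k) = k.
  move=> kM; rewrite /rank stepE modnDml (_ : (j.+1 + k + (M - j) = k + M.+1)%N).
    by rewrite modnDr modn_small.
  by lia.
have ordS_step k : ordS (step k) = step k.+1.
  by apply: ord_inj; rewrite /= !stepE -addn1 modnDml addn1 addnS.
have rank_lt w : w \in W -> (rank w < M)%N.
  move=> wW; rewrite ltn_neqAle -ltnS ltn_pmod // andbT.
  apply: contraNneq jW => rankM; rewrite -(step_rank w) rankM in wW.
  rewrite (_ : j = step M) //.
  by apply: ord_inj; rewrite stepE addSnnS modnDr modn_small.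
pose p k := step k \in W.
pose G := [set w in W | odd (run_length p (rank w))].
exists G; split.
- by apply/subsetP => w; rewrite inE => /andP[].
- move=> g; rewrite !inE => /andP[gW odd_g]; apply/negP => /andP[Sg_W].
  have gE : g = step (rank g) by rewrite step_rank.
  have rank_Sg : rank (ordS g) = (rank g).+1.
    by rewrite {1}gE ordS_step rank_step // rank_lt.
  have p_Sg : p (rank g).+1 by rewrite /p -rank_Sg step_rank.
  by rewrite rank_Sg /= p_Sg /= odd_g.
- move=> w wW; have [odd_w|even_w] := boolP (odd (run_length p (rank w))).
    by left; rewrite inE wW.
  right; have pw : p (rank w) by rewrite /p step_rank.
  have rankM : (rank w <= M)%N by rewrite -ltnS ltn_pmod.
  case Ek: (rank w) even_w pw rankM => [|k] + pk1; rewrite /= pk1 //= negbK => odd_k kM.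
  have pk : p k by rewrite -run_length_gt0; case: run_length odd_k.
  exists (step k); last by rewrite ordS_step -Ek step_rank.
  by rewrite inE rank_step ?(ltnW kM) //; apply/andP; split.
Qed.

End CyclicOrder.

Section SparseZeros.
Variables (R : realFieldType) (M : nat) (t : 'I_M.+1 -> R).
Hypothesis t_incr : forall i j : 'I_M.+1, (i < j)%N -> t i < t j.

Lemma poly_sparse_zeros_eq0_max n (S : {set 'I_M.+1}) (P : {poly R}) :
  #|S| = n.+1 -> sparse S -> ord_max \notin S -> (size P <= n.*2.+1)%N ->
  (forall i, P.[t i] <= 0) -> {in S, forall i, P.[t i] = 0} -> P = 0.
Proof.
move=> cardS spS maxS szP P_le0 P_S.
pose T := [set ordS s | s in S].
have disjST : [disjoint S & T] by apply: sparse_shift_disjoint.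
pose U := S :|: T.
have cardU : #|U| = n.*2.+2.
  rewrite cardsU (disjoint_setI0 disjST) cards0 subn0 card_imset; last exact: ordS_inj.
  by rewrite cardS addSn addnS addnn.
have sumU (F : 'I_M.+1 -> R) :
    \sum_(i in U) F i = \sum_(i in S) F i + \sum_(i in T) F i.
  by rewrite -bigU //; apply: eq_bigl => i; rewrite !inE.
pose w i := \prod_(j in U :\ i) (t i - t j).
have w_gt0 i : i \in T -> 0 < w i.
  by case/imsetP => s sS ->; apply/prod_sub_gt0/sparse_shift_above_even.
have sumT : \sum_(i in T) P.[t i] / w i = 0.
  have := divided_difference_eq0 (x := t) (U := U) (q := P) (in2W (incr_inj t_incr)).
  rewrite cardU ltnS sumU => /(_ szP).
  by rewrite big1 ?add0r // => i iS; rewrite P_S ?mul0r.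
have P_T : {in T, forall i, P.[t i] = 0}.
  have term_ge0 i : i \in T -> 0 <= - (P.[t i] / w i).
    by move=> iT; rewrite oppr_ge0 mulr_le0_ge0 // invr_ge0 ltW // w_gt0.
  have sum0 : \sum_(i in T) - (P.[t i] / w i) = 0 by rewrite sumrN sumT oppr0.
  move=> i iT; apply/eqP; have /eqP := psumr_eq0P term_ge0 sum0 iT.
  by rewrite oppr_eq0 mulf_eq0 invr_eq0 (gt_eqF (w_gt0 _ iT)) orbF.
apply: (poly_eq0_on (U := U) (in2W (incr_inj t_incr))); first by rewrite cardU ltnW.
by move=> i; rewrite inE => /orP[/P_S|/P_T].
Qed.

End SparseZeros.

Lemma poly_sparse_zeros_eq0 (R : realFieldType) M (t : 'I_M.+1 -> R) n
    (S : {set 'I_M.+1}) (P : {poly R}) :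
  (forall i j : 'I_M.+1, (i < j)%N -> t i < t j) ->
  #|S| = n.+1 -> sparse S -> ord_max \notin S \/ ord0 \notin S ->
  (size P <= n.*2.+1)%N ->
  (forall i, P.[t i] <= 0) -> {in S, forall i, P.[t i] = 0} -> P = 0.
Proof.
move=> t_incr cardS spS [maxS|minS]; first exact: poly_sparse_zeros_eq0_max.
move=> szP P_le0 P_S.
pose t' i := - t (rev_ord i).
have t'_incr (i j : 'I_M.+1) : (i < j)%N -> t' i < t' j.
  by move=> ij; rewrite ltrN2 t_incr //=; have := ltn_ord j; lia.
have P'E x : (P \Po - 'X).[x] = P.[- x] by rewrite horner_comp hornerN hornerX.
suff /eqP : P \Po - 'X = 0 by rewrite comp_poly_eq0 ?size_polyN ?size_polyX // => /eqP.
apply: (@poly_sparse_zeros_eq0_max _ _ _ t'_incr n [set rev_ord i | i in S]).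
- by rewrite card_imset //; apply: rev_ord_inj.
- move=> _ _ /imsetP[i iS ->] /imsetP[j jS ->] /= ij.
  have := spS _ _ jS iS; have := ltn_ord i; have := ltn_ord j; lia.
- apply/notin_ord_max => _ /imsetP[i iS ->] /=.
  by have := (notin_ord0 S).1 minS i iS; have := ltn_ord i; lia.
- rewrite (leq_trans (size_comp_poly_leq _ _)) // size_polyN size_polyX muln1.
  by case: (size P) szP.
- by move=> i; rewrite P'E opprK.
- by move=> _ /imsetP[i iS ->]; rewrite P'E opprK rev_ordK P_S.
Qed.

Section GaleFactor.
Variables (R : realDomainType) (N : nat) (t : 'I_N -> R).
Hypothesis t_incr : forall i j : 'I_N, (i < j)%N -> t i < t j.

(* The sign makes the factor of a wrapped pair {N - 1, 0} nonnegative too. *)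
Definition gale_factor (g h : 'I_N) : {poly R} :=
  (if (h < g)%N then -1 else 1) *: (('X - (t g)%:P) * ('X - (t h)%:P)).

Lemma horner_gale_factor g h x : (gale_factor g h).[x] =
  (if (h < g)%N then -1 else 1) * ((x - t g) * (x - t h)).
Proof. by rewrite hornerZ hornerM !hornerXsubC. Qed.

Lemma size_gale_factor g h : (size (gale_factor g h) <= 3)%N.
Proof.
rewrite (leq_trans (size_scale_leq _ _)) // (leq_trans (size_polyMleq _ _)) //.
by rewrite !size_XsubC.
Qed.

Lemma gale_factor_eq0 g h i : ((gale_factor g h).[t i] == 0) = (i == g) || (i == h).
Proof.
rewrite horner_gale_factor !mulf_eq0 !subr_eq0 !(inj_eq (incr_inj t_incr)).
by case: ifP; rewrite ?oppr_eq0 oner_eq0.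
Qed.

Lemma gale_factor_ge0 g h i : h = g \/ h = ordS g -> 0 <= (gale_factor g h).[t i].
Proof.
rewrite horner_gale_factor; have [-> _|hg] := eqVneq h g.
  by rewrite ltnn mul1r -expr2 sqr_ge0.
case=> [/eqP|hE]; first by rewrite (negbTE hg).
have [gN|gN] := ltnP g.+1 N.
  have hv : (h : nat) = g.+1 by rewrite hE /= modn_small.
  rewrite hv ltnNge leqnSn mul1r; have [ig|gi] := leqP i g.
    have ih : (i <= h)%N by rewrite hv leqW.
    by apply: mulr_le0; rewrite subr_le0 incr_le.
  have [gi' hi] : (g <= i)%N /\ (h <= i)%N by rewrite hv ltnW.
  by apply: mulr_ge0; rewrite subr_ge0 incr_le.
have gE : g.+1 = N by apply/eqP; rewrite eqn_leq gN ltn_ord.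
have hv : (h : nat) = 0%N by rewrite hE /= gE modnn.
have g_gt0 : (0 < g)%N.
  by rewrite lt0n; apply: contraNneq hg => g0; apply/eqP/val_inj; rewrite /= hv g0.
have ig : (i <= g)%N by rewrite -ltnS gE.
have hi : (h <= i)%N by rewrite hv.
by rewrite hv g_gt0 mulN1r oppr_ge0 mulr_le0_ge0 // ?subr_le0 ?subr_ge0 incr_le.
Qed.

End GaleFactor.

Section MomentPoly.
Variables (R : realType) (d : nat).
Implicit Types (c : 'rV[R]_d) (b s : R) (P : {poly R}).

Definition moment_poly c b : {poly R} := \sum_(j < d) c 0 j *: 'X^(j.+1) - b%:P.

Lemma horner_moment_poly c b s : (moment_poly c b).[s] = moment_lin c s - b.
Proof.
rewrite hornerD hornerN hornerC horner_sum; congr (_ - _).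
by apply: eq_bigr => j _; rewrite hornerZ hornerXn.
Qed.

Lemma size_moment_poly c b : (size (moment_poly c b) <= d.+1)%N.
Proof.
rewrite (leq_trans (size_polyD _ _)) // geq_max size_polyN.
rewrite (leq_trans (size_polyC_leq1 _)) // andbT (leq_trans (size_sum _ _ _)) //.
apply/bigmax_leqP => j _.
by rewrite (leq_trans (size_scale_leq _ _)) // size_polyXn ltnS ltn_ord.
Qed.

Lemma coef_moment_poly c b (j : 'I_d) : (moment_poly c b)`_j.+1 = c 0 j.
Proof.
rewrite coefB coefC subr0 coef_sum (bigD1 j) //= coefZ coefXn eqxx mulr1.
rewrite big1 ?addr0 // => i ij; rewrite coefZ coefXn eqSS.
by rewrite (_ : (j == i :> nat) = false) ?mulr0 //; apply/negbTE; rewrite eq_sym.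
Qed.

Lemma horner_coef_moment_lin P s : (size P <= d.+1)%N ->
  P.[s] = moment_lin (\row_(j < d) P`_j.+1) s + P`_0.
Proof.
move=> szP; rewrite (horner_coef_wide _ szP) big_ord_recl expr0 mulr1 addrC.
by congr (_ + _); apply: eq_bigr => j _; rewrite mxE.
Qed.

Lemma cyclic_proper_faceP m (t : 'I_m -> R) (W : {set 'I_m}) :
  cyclic_proper_face d t W <->
  exists2 P : {poly R}, (1 < size P <= d.+1)%N &
    forall i, P.[t i] <= 0 /\ (P.[t i] == 0) = (i \in W).
Proof.
split=> [[c [b [c_neq0 ct]]] | [P /andP[P_gt1 szP] Pt]].
  exists (moment_poly c b) => [|i]; last by rewrite horner_moment_poly subr_le0 subr_eq0.
  rewrite size_moment_poly andbT.
  have /existsP[j cj] : [exists j, c 0 j != 0].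
    apply: contraNT c_neq0 => /existsPn c0; apply/eqP/rowP => j.
    by rewrite mxE; apply/eqP/negPn/c0.
  rewrite ltnNge; apply: contra cj => szc.
  by rewrite -(coef_moment_poly c b) nth_default // (leq_trans szc).
exists (\row_(j < d) P`_j.+1), (- P`_0); split.
  apply: contraTneq P_gt1 => c0; rewrite -leqNgt; apply/leq_sizeP => -[//|j] _.
  have [jd|dj] := ltnP j d; first by have /rowP/(_ (Ordinal jd)) := c0; rewrite !mxE.
  by rewrite nth_default // (leq_trans szP).
by move=> i; rewrite -subr_le0 -subr_eq0 opprK -horner_coef_moment_lin.
Qed.

End MomentPoly.

Lemma subset_of_card (T : finType) (A : {set T}) k : (k <= #|A|)%N ->
  exists2 B : {set T}, B \subset A & #|B| = k.
Proof.
elim: k => [|k IHk] kA; first by exists set0; rewrite ?sub0set ?cards0.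
have [B BA cardB] := IHk (ltnW kA).
have /card_gt0P[x] : (0 < #|A :\: B|)%N by rewrite cardsD (setIidPr BA) cardB subn_gt0.
rewrite inE => /andP[xB xA]; exists (x |: B); first by rewrite subUset sub1set xA BA.
by rewrite cardsU1 xB cardB.
Qed.

(* The vertex sets of the generators of I_{n+1,1,m-1} and I_{n+1,2,m}. *)
Definition obstruction M n (S : {set 'I_M.+1}) : Prop :=
  [/\ #|S| = n.+1, sparse S & ord_max \notin S \/ ord0 \notin S].

Section CyclicFaces.
Variables (R : realType) (M : nat) (t : 'I_M.+1 -> R).
Hypothesis t_incr : forall i j : 'I_M.+1, (i < j)%N -> t i < t j.

Lemma cyclic_face_of_pairing n (W G : {set 'I_M.+1}) (j w0 : 'I_M.+1) :
  j \notin W -> w0 \in W -> G \subset W ->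
  {in W, forall w, w \in G \/ exists2 g, g \in G & w = ordS g} ->
  (#|G| <= n)%N -> cyclic_face n.*2 t W.
Proof.
move=> jW w0W GW W_cover cardG.
pose partner g := if ordS g \in W then ordS g else g.
pose P := - \prod_(g in G) gale_factor t g (partner g).
have P_eq0 i : (P.[t i] == 0) = (i \in W).
  rewrite hornerN oppr_eq0 horner_prod; apply/prodf_eq0/idP => [[g gG]|iW].
    rewrite gale_factor_eq0 // => /orP[] /eqP ->; first exact: (subsetP GW).
    by rewrite /partner; case: ifP => // _; apply: (subsetP GW).
  have [iG|[g gG ig]] := W_cover i iW.
    by exists i; rewrite // gale_factor_eq0 // eqxx.
  by exists g; rewrite // gale_factor_eq0 // /partner -ig iW eqxx orbT.
have P_le0 i : P.[t i] <= 0.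
  rewrite hornerN oppr_le0 horner_prod; apply: prodr_ge0 => g _.
  by apply: gale_factor_ge0 => //; rewrite /partner; case: ifP; [right|left].
right; apply/cyclic_proper_faceP; exists P => [|i]; last by rewrite P_le0 P_eq0.
apply/andP; split.
  rewrite ltnNge; apply/negP => /size1_polyC P_const.
  by move: (P_eq0 w0) (P_eq0 j); rewrite w0W (negbTE jW) P_const !hornerC => ->.
rewrite size_polyN (leq_trans (size_poly_prod_leq _ _)) // (@eq_card _ _ G) //.
set s := (\sum_(g in G) _)%N.
have : (s <= #|G| * 3)%N.
  by rewrite -sum_nat_const; apply: leq_sum => g _; apply: size_gale_factor.
lia.
Qed.

Lemma obstruction_not_cyclic_face n (S W : {set 'I_M.+1}) :
  obstruction n S -> S \subset W -> ~ cyclic_face n.*2 t W.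
Proof.
move=> [cardS spS endS] SW [W0|/cyclic_proper_faceP[P /andP[P_gt1 szP] Pt]].
  by move: (subset_leq_card SW); rewrite W0 cards0 cardS.
suff P0 : P = 0 by rewrite P0 size_poly0 in P_gt1.
apply: (poly_sparse_zeros_eq0 t_incr cardS spS endS szP) => [i|i iS].
  by case: (Pt i).
by apply/eqP; case: (Pt i) => _ ->; apply: (subsetP SW).
Qed.

Lemma not_cyclic_face_obstruction n (W : {set 'I_M.+1}) :
  (n.*2 < M)%N -> ~ cyclic_face n.*2 t W ->
  exists2 S : {set 'I_M.+1}, S \subset W & obstruction n S.
Proof.
move=> nM nonface.
have [W0|[w0 w0W]] := set_0Vmem W; first by case: nonface; left.
have [j jW|W_full] := pickP (fun j => j \notin W); last first.
  have [S [cardS spS maxS]] := sparse_evens nM.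
  exists S; last by split=> //; left.
  by apply/subsetP => i _; have /negbFE := W_full i.
have [G [GW G_free W_cover]] := cyclic_pairing jW.
have [cardG|/subset_of_card[S SG cardS]] := leqP #|G| n.
  by case: nonface; apply: (cyclic_face_of_pairing jW w0W GW W_cover cardG).
have [spS endS] : sparse S /\ (ord_max \notin S \/ ord0 \notin S).
  apply: cyclic_sparse => s sS; apply: contra (G_free s (subsetP SG s sS)).
  exact: (subsetP SG).
by exists S; first exact: subset_trans SG GW.
Qed.

End CyclicFaces.

Theorem lemma3p1 (k : fieldType) (R : realType) (d m : nat) (t : 'I_m -> R) :
  ~~ odd d -> (2 <= d)%N -> (d < m.-1)%N ->
  (forall i j : 'I_m, (i < j)%N -> t i < t j) ->
  forall p : {mpoly k[m]},
    @SR_ideal k m (@cyclic_face R d m t) p <->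
    @ideal_gen k m (fun g => Iapq k m (d./2).+1 1 m.-1 g \/ Iapq k m (d./2).+1 2 m g) p.
Proof.
move=> d_even _ dm t_incr p.
case: m t t_incr dm p => [//|M] t t_incr /= dM p.
have dE : d = (d./2).*2 by rewrite -[LHS]odd_double_half (negbTE d_even).
move: (d./2) dE dM => n -> nM.
have obstruction_gen (S : {set 'I_M.+1}) :
    obstruction n S -> SR_ideal (cyclic_face n.*2 t) (sqfree_mon k S).
  move=> obS; apply: ideal_gen_mem; exists S; split=> //.
  exact: (obstruction_not_cyclic_face t_incr obS (subxx S)).
split.
- apply: ideal_gen_sub => _ [W [nonface ->]].
  have [S SW [cardS spS endS]] := not_cyclic_face_obstruction t_incr nM nonface.
  rewrite (sqfree_mon_subset k SW); apply/ideal_genMl/ideal_gen_mem.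
  by case: endS => [/notin_ord_max|/notin_ord0] S_range; [left|right];
    apply: ideal_gen_mem; exists S; split=> // i /S_range; have := ltn_ord i; lia.
- apply: ideal_gen_sub => g [] gen_g; apply: (ideal_gen_sub _ gen_g);
    move=> _ [S [cardS S_range spS ->]]; apply: obstruction_gen; split=> //;
    [left; apply/notin_ord_max | right; apply/notin_ord0] => i /S_range; lia.
Qed.
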